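(* Let $M\in\mathbb{R}^{p\times q}_+$ with $\operatorname{rank}(M)=\binom{k+1}{2}$ and $\operatorname{rank}_{\mathrm{psd}}(M)=k$. Fix a rank factorization $M=UV$ with $U\in\mathbb{R}^{p\times d}$, $V\in\mathbb{R}^{d\times q}$, $d=\binom{k+1}{2}$; let $u_i\in\mathbb{R}^d$ be the $i$-th row of $U$ (as a vector) and $v_j\in\mathbb{R}^d$ the $j$-th column of $V$. Let $P=\operatorname{cone}(u_1,\dots,u_p)$ and $Q=\{x\in\mathbb{R}^d: v_j^Tx\ge0\ \text{for all } j\}$. Then $\mathcal{SF}(M)$ is homeomorphic to $\Delta_k(P,Q)$.
   Context: $\mathcal{S}^k$ is the space of real symmetric $k\times k$ matrices, $\mathcal{S}^k_+$ the psd cone, $\langle A,B\rangle=\operatorname{trace}(AB)$. The psd rank of $M$ is the smallest $k$ admitting $A_1,\dots,A_p,B_1,\dots,B_q\in\mathcal{S}^k_+$ with $M_{ij}=\langle A_i,B_j\rangle$. With $k=\operatorname{rank}_{\mathrm{psd}}(M)$, the space of psd factorizations $\mathcal{SF}(M)\subseteq(\mathcal{S}^k)^{p+q}$ is the set of all tuples $(A_1,\dots,A_p,B_1,\dots,B_q)$ of matrices in $\mathcal{S}^k_+$ with $M_{ij}=\langle A_i,B_j\rangle$ for all $i,j$, with the subspace topology. $\Delta_k(P,Q)$ is the set of all linear maps $\pi:\mathcal{S}^k\to\mathbb{R}^{\binom{k+1}{2}}$ with $P\subseteq\pi(\mathcal{S}^k_+)\subseteq Q$, with the subspace topology of the space of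 linear maps. *)

(* real numbers are Stdlib's R.
   Matrices/vectors are represented as functions on nat, only the entries with
   indices below the relevant dimension matter. *)
From Stdlib Require Import Reals.
Open Scope R_scope.

Fixpoint rsum (n : nat) (f : nat -> R) : R :=
  match n with O => 0 | S m => rsum m f + f m end.

Definition mat := nat -> nat -> R.
Definition vec := nat -> R.

Definition sym (k : nat) (A : mat) : Prop :=
  forall a b, (a < k)%nat -> (b < k)%nat -> A a b = A b a.

Definition psd (k : nat) (A : mat) : Prop :=
  sym k A /\ forall x : vec, 0 <= rsum k (fun a => rsum k (fun b => x a * A a b * x b)).

Definition inner (k : nat) (A B : mat) : R :=
  rsum k (fun a => rsum k (fun b => A a b * B b a)).

Definition is_psd_fact (p q k : nat) (M : mat) (A B : nat -> mat) : Prop :=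
  (forall i, (i < p)%nat -> psd k (A i)) /\
  (forall j, (j < q)%nat -> psd k (B j)) /\
  (forall i j, (i < p)%nat -> (j < q)%nat -> M i j = inner k (A i) (B j)).

Definition has_psd_fact (p q k : nat) (M : mat) : Prop :=
  exists A B, is_psd_fact p q k M A B.

Definition psd_rank_eq (p q : nat) (M : mat) (k : nat) : Prop :=
  has_psd_fact p q k M /\ forall k', has_psd_fact p q k' M -> (k <= k')%nat.

Definition lin_indep (p r : nat) (f : nat -> vec) : Prop :=
  forall c : nat -> R,
    (forall i, (i < p)%nat -> rsum r (fun l => c l * f l i) = 0) ->
    forall l, (l < r)%nat -> c l = 0.

Definition mat_rank_eq (p q : nat) (M : mat) (r : nat) : Prop :=
  (exists c : nat -> nat, (forall l, (l < r)%nat -> (c l < q)%nat) /\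
     lin_indep p r (fun l i => M i (c l))) /\
  (forall c : nat -> nat, (forall l, (l < S r)%nat -> (c l < q)%nat) ->
     ~ lin_indep p (S r) (fun l i => M i (c l))).

Definition tri (k : nat) : nat := Nat.div (k * (k + 1)) 2.

(* The space SF(M) inside (S^k)^(p+q), with the (L1, hence Euclidean) distance *)
Definition SF (p q k : nat) (M : mat) (AB : (nat -> mat) * (nat -> mat)) : Prop :=
  is_psd_fact p q k M (fst AB) (snd AB).

Definition dSF (p q k : nat) (X Y : (nat -> mat) * (nat -> mat)) : R :=
  rsum p (fun i => rsum k (fun a => rsum k (fun b =>
     Rabs (fst X i a b - fst Y i a b)))) +
  rsum q (fun j => rsum k (fun a => rsum k (fun b =>
     Rabs (snd X j a b - snd Y j a b)))).

(* A linear map pi : S^k -> R^d is represented by d symmetric matrices C_0..C_(d-1),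
   pi(X)_l = <C_l, X>  (the standard identification Hom(S^k,R^d) = (S^k)^d). *)
Definition is_linmap (k d : nat) (C : nat -> mat) : Prop :=
  forall l, (l < d)%nat -> sym k (C l).

Definition apply_lin (k : nat) (C : nat -> mat) (X : mat) : vec :=
  fun l => inner k (C l) X.

Definition in_P (p d : nat) (U : mat) (x : vec) : Prop :=
  exists lam : nat -> R, (forall i, (i < p)%nat -> 0 <= lam i) /\
    forall l, (l < d)%nat -> x l = rsum p (fun i => lam i * U i l).

Definition in_Q (q d : nat) (V : mat) (x : vec) : Prop :=
  forall j, (j < q)%nat -> 0 <= rsum d (fun l => V l j * x l).

Definition DeltaPQ (p q k d : nat) (U V : mat) (C : nat -> mat) : Prop :=
  is_linmap k d C /\
  (forall x, in_P p d U x ->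
     exists X, psd k X /\ forall l, (l < d)%nat -> x l = apply_lin k C X l) /\
  (forall X, psd k X -> in_Q q d V (apply_lin k C X)).

Definition dLin (k d : nat) (C C' : nat -> mat) : R :=
  rsum d (fun l => rsum k (fun a => rsum k (fun b => Rabs (C l a b - C' l a b)))).

Definition cont_on {X Y : Type} (S : X -> Prop) (dX : X -> X -> R) (dY : Y -> Y -> R)
  (f : X -> Y) : Prop :=
  forall x, S x -> forall eps, 0 < eps -> exists delta, 0 < delta /\
    forall x', S x' -> dX x x' < delta -> dY (f x) (f x') < eps.

(* S (in pseudometric space X) and T (in Y) are homeomorphic; points at distance 0
   represent the same point of the actual space. *)
Definition homeomorphic {X Y : Type} (S : X -> Prop) (dX : X -> X -> R)
  (T : Y -> Prop) (dY : Y -> Y -> R) : Prop :=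
  exists (f : X -> Y) (g : Y -> X),
    (forall x, S x -> T (f x)) /\ (forall y, T y -> S (g y)) /\
    (forall x, S x -> dX (g (f x)) x = 0) /\ (forall y, T y -> dY (f (g y)) y = 0) /\
    cont_on S dX dY f /\ cont_on T dY dX g.

From Stdlib Require Import Reals Lra Lia Psatz Classical ClassicalEpsilon.
Open Scope R_scope.

(* Let [c] index [tri k] linearly independent columns of [M = U V]. In a psd factorization
   (A, B) of size k the matrices B_(c m) are then linearly independent, hence a basis of S^k,
   and the square submatrix of V on the columns [c] is invertible. So there is a unique linear
   map pi : S^k -> R^(tri k) whose adjoint sends v_j to B_j; it satisfies pi(A_i) = u_i, and
   Delta_k(P, Q) holds because <B_j, X> >= 0 for psd X. Conversely, pi in Delta_k(P, Q) gives
   the factorization A_i = any psd lift of u_i, B_j = pi^T(v_j), and pi is injective on S^k,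
   which makes the lift unique. The first map is linear; the second is locally Lipschitz since
   the inverse of pi is bounded, and the lift moves little when pi moves little. *)

Lemma rsum_ext n f g : (forall i, (i < n)%nat -> f i = g i) -> rsum n f = rsum n g.
Proof.
  induction n as [|n IH]; intros H; simpl; auto.
  rewrite IH, H; auto; intros; apply H; lia.
Qed.

Lemma rsum_plus n f g : rsum n (fun i => f i + g i) = rsum n f + rsum n g.
Proof. induction n; simpl; lra. Qed.

Lemma rsum_minus n f g : rsum n (fun i => f i - g i) = rsum n f - rsum n g.
Proof. induction n; simpl; lra. Qed.

Lemma rsum_scal_l n a f : rsum n (fun i => a * f i) = a * rsum n f.
Proof. induction n; simpl; lra. Qed.

Lemma rsum_scal_r n a f : rsum n (fun i => f i * a) = rsum n f * a.
Proof. induction n; simpl; lra. Qed.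

Lemma rsum_eq0 n f : (forall i, (i < n)%nat -> f i = 0) -> rsum n f = 0.
Proof. induction n as [|n IH]; intros H; simpl; auto. rewrite IH, H; auto; lra. Qed.

Lemma rsum_swap n m (f : nat -> nat -> R) :
  rsum n (fun a => rsum m (fun b => f a b)) = rsum m (fun b => rsum n (fun a => f a b)).
Proof.
  induction n as [|n IH]; simpl.
  - symmetry. apply rsum_eq0. auto.
  - rewrite IH, <- rsum_plus. auto.
Qed.

Lemma rsum_swap3 n m r (f : nat -> nat -> nat -> R) :
  rsum n (fun a => rsum m (fun b => rsum r (fun s => f a b s))) =
  rsum r (fun s => rsum n (fun a => rsum m (fun b => f a b s))).
Proof.
  rewrite (rsum_ext n _ (fun a => rsum r (fun s => rsum m (fun b => f a b s))))
    by (intros; apply rsum_swap).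
  apply rsum_swap.
Qed.

Lemma rsum_mul n m f g : rsum n (fun a => rsum m (fun b => f a * g b)) = rsum n f * rsum m g.
Proof.
  rewrite <- rsum_scal_r. apply rsum_ext. intros. apply rsum_scal_l.
Qed.

Lemma rsum_le n f g : (forall i, (i < n)%nat -> f i <= g i) -> rsum n f <= rsum n g.
Proof.
  induction n as [|n IH]; intros H; simpl; [lra|].
  specialize (IH ltac:(intros; apply H; lia)). specialize (H n ltac:(lia)). lra.
Qed.

Lemma rsum_ge0 n f : (forall i, (i < n)%nat -> 0 <= f i) -> 0 <= rsum n f.
Proof. intros H. rewrite <- (rsum_eq0 n (fun _ => 0)) by auto. apply rsum_le. auto. Qed.

Lemma rsum_abs n f : Rabs (rsum n f) <= rsum n (fun i => Rabs (f i)).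
Proof.
  induction n; simpl; [rewrite Rabs_R0; lra|].
  eapply Rle_trans; [apply Rabs_triang | lra].
Qed.

Lemma rsum_term_le n f i :
  (forall j, (j < n)%nat -> 0 <= f j) -> (i < n)%nat -> f i <= rsum n f.
Proof.
  induction n as [|n IH]; intros H Hi; simpl; [lia|].
  pose proof (rsum_ge0 n f ltac:(intros; apply H; lia)).
  destruct (Nat.eq_dec i n) as [->|]; [lra|].
  pose proof (H n ltac:(lia)). pose proof (IH ltac:(intros; apply H; lia) ltac:(lia)). lra.
Qed.

Lemma rsum_ge0_eq0 n f :
  (forall j, (j < n)%nat -> 0 <= f j) -> rsum n f = 0 -> forall i, (i < n)%nat -> f i = 0.
Proof.
  intros H H0 i Hi. pose proof (rsum_term_le n f i H Hi). pose proof (H i Hi). lra.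
Qed.

Definition kron (i j : nat) : R := if Nat.eqb i j then 1 else 0.

Lemma kron_sym i j : kron i j = kron j i.
Proof. unfold kron. rewrite Nat.eqb_sym. auto. Qed.

Lemma rsum_kron_r n (f : nat -> R) j : (j < n)%nat -> rsum n (fun i => f i * kron i j) = f j.
Proof.
  induction n as [|n IH]; intros Hj; simpl; [lia|].
  unfold kron at 2. destruct (Nat.eqb_spec n j) as [->|].
  - rewrite rsum_eq0; [lra|]. intros i Hi. unfold kron.
    destruct (Nat.eqb_spec i j); [lia|lra].
  - rewrite IH by lia. lra.
Qed.

Lemma rsum_kron_l n (f : nat -> R) j : (j < n)%nat -> rsum n (fun i => kron j i * f i) = f j.
Proof.
  intros Hj. rewrite <- (rsum_kron_r n f j Hj). apply rsum_ext. intros. rewrite kron_sym. ring.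
Qed.

Definition swap_idx (i n l : nat) : nat :=
  if Nat.eqb l i then n else if Nat.eqb l n then i else l.

Lemma swap_idx_invol i n l : swap_idx i n (swap_idx i n l) = l.
Proof.
  unfold swap_idx.
  destruct (Nat.eqb_spec l i); [|destruct (Nat.eqb_spec l n)];
    repeat (match goal with |- context [Nat.eqb ?a ?b] => destruct (Nat.eqb_spec a b) end; cbn);
    lia.
Qed.

Lemma swap_idx_lt i n l : (i <= n)%nat -> (l < S n)%nat -> (swap_idx i n l < S n)%nat.
Proof. unfold swap_idx. intros. destruct (Nat.eqb l i), (Nat.eqb l n); lia. Qed.

Lemma rsum_swap_idx n i f : (i <= n)%nat -> rsum (S n) (fun l => f (swap_idx i n l)) = rsum (S n) f.
Proof.
  intros Hi. simpl.
  assert (Hlow : forall m, (m <= n)%nat ->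
            rsum m (fun l => f (swap_idx i n l)) + (if Nat.ltb i m then f i else 0)
            = rsum m f + (if Nat.ltb i m then f n else 0)).
  { induction m as [|m IH]; intros Hm; simpl; [lra|].
    specialize (IH ltac:(lia)). unfold swap_idx at 2.
    destruct (Nat.ltb_spec i m), (Nat.ltb_spec i (S m)), (Nat.eqb_spec m i),
      (Nat.eqb_spec m n); subst; try lia; lra. }
  specialize (Hlow n (le_n n)). unfold swap_idx at 2. rewrite Nat.eqb_refl.
  destruct (Nat.eqb_spec n i), (Nat.ltb_spec i n); subst; try lia; lra.
Qed.

(** * Linear dependence *)

Definition nontrivial (m : nat) (c : nat -> R) : Prop := exists l, (l < m)%nat /\ c l <> 0.

Lemma nontrivial_swap_idx m i c :
  (i <= m)%nat -> nontrivial (S m) c -> nontrivial (S m) (fun l => c (swap_idx i m l)).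
Proof.
  intros Hi [l [Hl Hc]]. exists (swap_idx i m l). split.
  - apply swap_idx_lt; auto.
  - rewrite swap_idx_invol. auto.
Qed.

Lemma homogeneous_system_nontrivial n m (a : nat -> nat -> R) :
  (n < m)%nat -> exists c, nontrivial m c /\
    forall s, (s < n)%nat -> rsum m (fun l => c l * a l s) = 0.
Proof.
  revert m a. induction n as [|n IH]; intros m a Hnm.
  - exists (fun _ => 1). split; [exists 0%nat; split; [lia|lra] | intros; lia].
  - destruct (classic (exists l0, (l0 < m)%nat /\ a l0 n <> 0)) as [[l0 [Hl0 Hpiv]]|Hzero].
    2:{ destruct (IH m a ltac:(lia)) as [c [Hc Hsol]]. exists c. split; auto.
        intros s Hs. destruct (Nat.eq_dec s n) as [->|]; [|apply Hsol; lia].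
        apply rsum_eq0. intros l Hl.
        destruct (Req_dec (a l n) 0) as [->|]; [ring|]. exfalso. eauto. }
    destruct m as [|m]; [lia|].
    (* Move the pivot row to the last position, then eliminate the unknown [n]. *)
    set (b := fun l s => a (swap_idx l0 m l) s).
    set (piv := b m n).
    assert (Hb : piv <> 0).
    { unfold piv, b, swap_idx. rewrite Nat.eqb_refl.
      destruct (Nat.eqb_spec m l0) as [->|]; auto. }
    destruct (IH m (fun l s => b l s - b l n / piv * b m s) ltac:(lia)) as [c [Hc Hsol]].
    set (c' := fun l => if Nat.ltb l m then c l else - rsum m (fun l => c l * b l n) / piv).
    assert (Hsol' : forall s, (s < S n)%nat -> rsum (S m) (fun l => c' l * b l s) = 0).
    { intros s Hs. simpl. unfold c' at 2. rewrite Nat.ltb_irrefl.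
      rewrite (rsum_ext m _ (fun l => c l * b l s)).
      2:{ intros l Hl. unfold c'. destruct (Nat.ltb_spec l m); [auto|lia]. }
      destruct (Nat.eq_dec s n) as [->|].
      - fold piv. field. auto.
      - specialize (Hsol s ltac:(lia)).
        rewrite (rsum_ext m _ (fun l => c l * b l s - b m s / piv * (c l * b l n))) in Hsol
          by (intros; field; auto).
        rewrite rsum_minus, rsum_scal_l in Hsol. rewrite <- Hsol. field. auto. }
    exists (fun l => c' (swap_idx l0 m l)). split.
    + apply nontrivial_swap_idx; [lia|].
      destruct Hc as [l1 [Hl1 Hcl1]]. exists l1. split; [lia|].
      unfold c'. destruct (Nat.ltb_spec l1 m); [auto|lia].
    + intros s Hs. rewrite <- (Hsol' s Hs), <- (rsum_swap_idx m l0 (fun l => c' l * b l s)) by lia.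
      apply rsum_ext. intros l _. unfold b. rewrite swap_idx_invol. auto.
Qed.

Section Span.

Variables (T : Type) (D : T -> Prop).

Definition free_on (n : nat) (w : nat -> T -> R) : Prop :=
  forall c : nat -> R, (forall t, D t -> rsum n (fun l => c l * w l t) = 0) ->
    forall l, (l < n)%nat -> c l = 0.

Definition spanned_on (n : nat) (w : nat -> T -> R) (z : T -> R) : Prop :=
  exists beta : nat -> R, forall t, D t -> z t = rsum n (fun l => beta l * w l t).

Lemma dependent_of_spanned n m (g w : nat -> T -> R) :
  (n < m)%nat -> (forall l, (l < m)%nat -> spanned_on n g (w l)) ->
  exists c, nontrivial m c /\ forall t, D t -> rsum m (fun l => c l * w l t) = 0.
Proof.
  intros Hnm Hw.
  destruct (choice (fun l (beta : nat -> R) => (l < m)%nat ->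
                      forall t, D t -> w l t = rsum n (fun s => beta s * g s t)))
    as [a Ha].
  { intros l. destruct (Nat.lt_ge_cases l m) as [Hl|Hl].
    - destruct (Hw l Hl) as [beta Hb]. exists beta. auto.
    - exists (fun _ => 0). lia. }
  destruct (homogeneous_system_nontrivial n m a Hnm) as [c [Hc Hsol]].
  exists c. split; auto. intros t Ht.
  rewrite (rsum_ext m _ (fun l => rsum n (fun s => c l * a l s * g s t))).
  2:{ intros l Hl. rewrite Ha, <- rsum_scal_l by auto. apply rsum_ext. intros. ring. }
  rewrite rsum_swap. apply rsum_eq0. intros s Hs.
  rewrite rsum_scal_r, Hsol by auto. ring.
Qed.

Lemma free_spanned_spans n (g w : nat -> T -> R) (z : T -> R) :
  free_on n w -> (forall l, (l < n)%nat -> spanned_on n g (w l)) ->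
  spanned_on n g z -> spanned_on n w z.
Proof.
  intros Hfree Hw Hz.
  set (w' := fun l => if Nat.ltb l n then w l else z).
  assert (Hlow : forall l t, (l < n)%nat -> w' l t = w l t).
  { intros l t Hl. unfold w'. destruct (Nat.ltb_spec l n); [auto|lia]. }
  destruct (dependent_of_spanned n (S n) g w') as [c [[l1 [Hl1 Hc1]] Hrel]].
  { lia. }
  { intros l Hl. unfold w'. destruct (Nat.ltb_spec l n); auto. }
  assert (Hrel' : forall t, D t -> rsum n (fun l => c l * w l t) + c n * z t = 0).
  { intros t Ht. rewrite <- (Hrel t Ht). simpl. unfold w' at 2. rewrite Nat.ltb_irrefl.
    f_equal. apply rsum_ext. intros. rewrite Hlow; auto. }
  destruct (Req_dec (c n) 0) as [Hcn|Hcn].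
  - exfalso. apply Hc1. destruct (Nat.eq_dec l1 n) as [->|]; auto.
    apply Hfree; [|lia]. intros t Ht. specialize (Hrel' t Ht). rewrite Hcn in Hrel'. lra.
  - exists (fun l => - c l / c n). intros t Ht.
    rewrite (rsum_ext n _ (fun l => (- / c n) * (c l * w l t))) by (intros; unfold Rdiv; ring).
    rewrite rsum_scal_l. specialize (Hrel' t Ht). field_simplify_eq; [lra|auto].
Qed.

End Span.

Arguments free_on {T}.
Arguments spanned_on {T}.

Lemma vec_spanned d (x : vec) : spanned_on (fun n => (n < d)%nat) d kron x.
Proof.
  exists x. intros n Hn. rewrite rsum_kron_r; auto.
Qed.

Lemma free_vectors_span d (w : nat -> vec) (x : vec) :
  free_on (fun n => (n < d)%nat) d w -> spanned_on (fun n => (n < d)%nat) d w x.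
Proof.
  intros Hw. apply (free_spanned_spans _ _ d kron); auto using vec_spanned.
Qed.

(** * Coordinates on symmetric matrices *)

Lemma tri_S k : tri (S k) = (tri k + S k)%nat.
Proof.
  unfold tri. replace (S k * (S k + 1))%nat with (k * (k + 1) + S k * 2)%nat by lia.
  rewrite Nat.div_add; lia.
Qed.

Lemma tri_pair_lt k a b : (a <= b)%nat -> (b < k)%nat -> (tri b + a < tri k)%nat.
Proof.
  intros Hab Hbk. induction Hbk as [|k _ IH]; rewrite tri_S; lia.
Qed.

Fixpoint tri_unpair (s : nat) : nat * nat :=
  match s with
  | O => (0%nat, 0%nat)
  | S s' => let (a, b) := tri_unpair s' in if Nat.ltb a b then (S a, b) else (0%nat, S b)
  end.

Lemma tri_unpair_spec s :
  (fst (tri_unpair s) <= snd (tri_unpair s))%nat /\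
  s = (tri (snd (tri_unpair s)) + fst (tri_unpair s))%nat.
Proof.
  induction s as [|s IH]; simpl; [auto|].
  destruct (tri_unpair s) as [a b]. simpl in IH.
  destruct (Nat.ltb_spec a b); simpl; rewrite ?tri_S; lia.
Qed.

Lemma tri_unpair_pair a b : (a <= b)%nat -> tri_unpair (tri b + a) = (a, b).
Proof.
  revert a. induction b as [|b IHb]; intros a Hab.
  - replace a with 0%nat by lia. reflexivity.
  - induction a as [|a IHa].
    + rewrite tri_S. replace (tri b + S b + 0)%nat with (S (tri b + b)) by lia. simpl.
      rewrite IHb, Nat.ltb_irrefl; auto.
    + replace (tri (S b) + S a)%nat with (S (tri (S b) + a)) by lia. simpl.
      rewrite IHa by lia. destruct (Nat.ltb_spec a (S b)); [auto|lia].
Qed.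

(* Coordinate [tri b + a] (with [a <= b]) of S^k belongs to the basis matrix E_ab + E_ba,
   with a single 1 when a = b. *)
Definition sym_basis (s : nat) : mat := fun a b =>
  if Nat.leb a b then kron s (tri b + a) else kron s (tri a + b).

Definition sym_coord (Z : mat) (s : nat) : R :=
  Z (fst (tri_unpair s)) (snd (tri_unpair s)).

Definition sq (k : nat) (t : nat * nat) : Prop := (fst t < k)%nat /\ (snd t < k)%nat.

Definition entries (Z : mat) (t : nat * nat) : R := Z (fst t) (snd t).

Lemma sym_basis_sym k s : sym k (sym_basis s).
Proof.
  intros a b _ _. unfold sym_basis.
  destruct (Nat.leb_spec a b), (Nat.leb_spec b a); auto; try lia.
  replace b with a by lia. auto.
Qed.

Lemma sym_expand k Z : sym k Z -> forall a b, (a < k)%nat -> (b < k)%nat ->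
  Z a b = rsum (tri k) (fun s => sym_coord Z s * sym_basis s a b).
Proof.
  intros HZ a b Ha Hb. unfold sym_basis.
  destruct (Nat.leb_spec a b).
  - rewrite rsum_kron_r by (apply tri_pair_lt; auto).
    unfold sym_coord. rewrite tri_unpair_pair; auto.
  - rewrite rsum_kron_r by (apply tri_pair_lt; lia).
    unfold sym_coord. rewrite tri_unpair_pair by lia. apply HZ; auto.
Qed.

Lemma sym_basis_free k : free_on (sq k) (tri k) (fun s => entries (sym_basis s)).
Proof.
  intros y Hy s Hs. destruct (tri_unpair_spec s) as [Hab Hsab].
  set (a := fst (tri_unpair s)) in *. set (b := snd (tri_unpair s)) in *.
  assert (Hb : (b < k)%nat).
  { destruct (Nat.lt_ge_cases b k) as [|Hkb]; auto.
    assert (tri k <= tri b)%nat; [|lia].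
    destruct (Nat.eq_dec k b) as [->|]; [lia|]. pose proof (tri_pair_lt b 0 k); lia. }
  specialize (Hy (a, b) ltac:(split; simpl; lia)).
  unfold entries, sym_basis in Hy. simpl in Hy.
  destruct (Nat.leb_spec a b); [|lia].
  rewrite rsum_kron_r, <- Hsab in Hy by (apply tri_pair_lt; auto). auto.
Qed.

Lemma sym_free_spans k (W : nat -> mat) (Z : mat) :
  free_on (sq k) (tri k) (fun l => entries (W l)) ->
  (forall l, (l < tri k)%nat -> sym k (W l)) -> sym k Z ->
  exists beta, forall a b, (a < k)%nat -> (b < k)%nat ->
    Z a b = rsum (tri k) (fun l => beta l * W l a b).
Proof.
  intros Hfree HW HZ.
  assert (Hspan : forall Y, sym k Y ->
            spanned_on (sq k) (tri k) (fun s => entries (sym_basis s)) (entries Y)).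
  { intros Y HY. exists (sym_coord Y). intros [a b] [Ha Hb]. apply sym_expand; auto. }
  destruct (free_spanned_spans _ _ _ _ _ (entries Z) Hfree
              ltac:(intros; apply Hspan; auto) (Hspan Z HZ)) as [beta Hbeta].
  exists beta. intros a b Ha Hb. apply (Hbeta (a, b)). split; auto.
Qed.

(** * Trace inner product and psd matrices *)

Lemma inner_comm k A B : inner k A B = inner k B A.
Proof.
  unfold inner. rewrite rsum_swap. apply rsum_ext. intros. apply rsum_ext. intros. ring.
Qed.

Lemma inner_ext_r k A B B' :
  (forall a b, (a < k)%nat -> (b < k)%nat -> B a b = B' a b) -> inner k A B = inner k A B'.
Proof.
  intros H. unfold inner. apply rsum_ext. intros. apply rsum_ext. intros. rewrite H; auto.
Qed.

Lemma inner_ext_l k A A' B :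
  (forall a b, (a < k)%nat -> (b < k)%nat -> A a b = A' a b) -> inner k A B = inner k A' B.
Proof.
  intros H. rewrite (inner_comm k A), (inner_comm k A'). apply inner_ext_r. auto.
Qed.

Lemma inner_comb_r k A n (beta : nat -> R) (W : nat -> mat) :
  inner k A (fun a b => rsum n (fun m => beta m * W m a b)) =
  rsum n (fun m => beta m * inner k A (W m)).
Proof.
  unfold inner.
  rewrite (rsum_ext k _ (fun a => rsum k (fun b => rsum n (fun m => beta m * (A a b * W m b a))))).
  - rewrite rsum_swap3. apply rsum_ext. intros.
    rewrite <- rsum_scal_l. apply rsum_ext. intros. apply rsum_scal_l.
  - intros. apply rsum_ext. intros. rewrite <- rsum_scal_l. apply rsum_ext. intros. ring.
Qed.

Lemma inner_comb_l k B n (beta : nat -> R) (W : nat -> mat) :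
  inner k (fun a b => rsum n (fun m => beta m * W m a b)) B =
  rsum n (fun m => beta m * inner k (W m) B).
Proof.
  rewrite inner_comm, inner_comb_r. apply rsum_ext. intros. rewrite inner_comm. auto.
Qed.

Lemma inner_minus_r k A B B' :
  inner k A (fun a b => B a b - B' a b) = inner k A B - inner k A B'.
Proof.
  unfold inner. rewrite <- rsum_minus. apply rsum_ext. intros.
  rewrite <- rsum_minus. apply rsum_ext. intros. ring.
Qed.

Lemma inner_minus_l k A A' B :
  inner k (fun a b => A a b - A' a b) B = inner k A B - inner k A' B.
Proof. rewrite inner_comm, inner_minus_r, !(inner_comm k B). auto. Qed.

Lemma inner_self_eq0 k Y : sym k Y -> inner k Y Y = 0 ->
  forall a b, (a < k)%nat -> (b < k)%nat -> Y a b = 0.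
Proof.
  intros HY H0 a b Ha Hb. unfold inner in H0.
  rewrite (rsum_ext k _ (fun a => rsum k (fun b => Y a b * Y a b))) in H0
    by (intros c Hc; apply rsum_ext; intros e He; rewrite (HY e c); auto).
  apply rsum_ge0_eq0 with (i := a) in H0; auto;
    [| intros; apply rsum_ge0; intros; nra].
  apply rsum_ge0_eq0 with (i := b) in H0; auto; [nra | intros; nra].
Qed.

Definition nrm (k : nat) (Y : mat) : R := rsum k (fun a => rsum k (fun b => Rabs (Y a b))).

Lemma nrm_ge0 k Y : 0 <= nrm k Y.
Proof. apply rsum_ge0. intros. apply rsum_ge0. intros. apply Rabs_pos. Qed.

Lemma nrm_ext k Y Y' :
  (forall a b, (a < k)%nat -> (b < k)%nat -> Rabs (Y a b) = Rabs (Y' a b)) -> nrm k Y = nrm k Y'.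
Proof. intros H. apply rsum_ext. intros. apply rsum_ext. intros. auto. Qed.

Lemma nrm_add k X Y : nrm k (fun a b => X a b + Y a b) <= nrm k X + nrm k Y.
Proof.
  unfold nrm. rewrite <- rsum_plus. apply rsum_le. intros.
  rewrite <- rsum_plus. apply rsum_le. intros. apply Rabs_triang.
Qed.

Lemma nrm_comb k n (beta : nat -> R) (W : nat -> mat) :
  nrm k (fun a b => rsum n (fun m => beta m * W m a b)) <=
  rsum n (fun m => Rabs (beta m) * nrm k (W m)).
Proof.
  unfold nrm. eapply Rle_trans.
  - apply (rsum_le k _ (fun a => rsum k (fun b => rsum n (fun m => Rabs (beta m) * Rabs (W m a b))))).
    intros. apply rsum_le. intros. eapply Rle_trans; [apply rsum_abs|].
    apply rsum_le. intros. rewrite Rabs_mult. lra.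
  - rewrite rsum_swap3. apply Req_le. apply rsum_ext. intros.
    rewrite <- rsum_scal_l. apply rsum_ext. intros. apply rsum_scal_l.
Qed.

Lemma entry_le_nrm k Y a b : (a < k)%nat -> (b < k)%nat -> Rabs (Y a b) <= nrm k Y.
Proof.
  intros Ha Hb. eapply Rle_trans.
  - apply (rsum_term_le k (fun b => Rabs (Y a b)) b); auto. intros. apply Rabs_pos.
  - apply (rsum_term_le k (fun a => rsum k (fun b => Rabs (Y a b))) a); auto.
    intros. apply rsum_ge0. intros. apply Rabs_pos.
Qed.

Lemma inner_bound k C Y : Rabs (inner k C Y) <= nrm k C * nrm k Y.
Proof.
  eapply Rle_trans; [apply rsum_abs|]. unfold nrm at 1. rewrite <- rsum_scal_r.
  apply rsum_le. intros. eapply Rle_trans; [apply rsum_abs|]. rewrite <- rsum_scal_r.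
  apply rsum_le. intros. rewrite Rabs_mult.
  apply Rmult_le_compat_l; [apply Rabs_pos | apply entry_le_nrm; auto].
Qed.

Definition quad (k : nat) (A : mat) (x : vec) : R :=
  rsum k (fun a => rsum k (fun b => x a * A a b * x b)).

Lemma quad_S k A x : sym (S k) A ->
  quad (S k) A x = quad k A x + 2 * x k * rsum k (fun a => x a * A a k) + A k k * x k * x k.
Proof.
  intros HA. unfold quad. simpl. rewrite rsum_plus.
  rewrite (rsum_ext k (fun b => x k * A k b * x b) (fun a => x k * (x a * A a k)))
    by (intros; rewrite (HA k i) by lia; ring).
  rewrite (rsum_ext k (fun a => x a * A a k * x k) (fun a => x k * (x a * A a k)))
    by (intros; ring).
  rewrite rsum_scal_l. ring.
Qed.

Lemma psd_outer k (x : vec) : psd k (fun a b => x a * x b).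
Proof.
  split; [intros a b _ _; ring|]. intros y.
  rewrite (rsum_ext k _ (fun a => rsum k (fun b => (y a * x a) * (y b * x b))))
    by (intros; apply rsum_ext; intros; ring).
  rewrite rsum_mul. nra.
Qed.

Lemma psd_comb k p (lam : nat -> R) (A : nat -> mat) :
  (forall i, (i < p)%nat -> 0 <= lam i) -> (forall i, (i < p)%nat -> psd k (A i)) ->
  psd k (fun a b => rsum p (fun i => lam i * A i a b)).
Proof.
  intros Hlam HA. split.
  - intros a b Ha Hb. apply rsum_ext. intros i Hi. destruct (HA i Hi) as [Hs _]. rewrite Hs; auto.
  - intros y.
    rewrite (rsum_ext k _ (fun a => rsum k (fun b => rsum p (fun i => lam i * (y a * A i a b * y b))))).
    + rewrite rsum_swap3. apply rsum_ge0. intros i Hi.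
      rewrite (rsum_ext k _ (fun a => lam i * rsum k (fun b => y a * A i a b * y b)))
        by (intros; rewrite <- rsum_scal_l; auto).
      rewrite rsum_scal_l. apply Rmult_le_pos; [auto | apply (HA i Hi)].
    + intros. apply rsum_ext. intros.
      rewrite <- rsum_scal_l, <- rsum_scal_r. apply rsum_ext. intros. ring.
Qed.

(* One step of a Cholesky factorisation. *)
Lemma psd_split k A : psd (S k) A ->
  exists v : vec, psd k (fun a b => A a b - v a * v b) /\
    forall a, (a < S k)%nat -> A a k = v a * v k.
Proof.
  intros [Hs Hq]. set (al := A k k). set (L := fun y : vec => rsum k (fun a => y a * A a k)).
  assert (Hexp : forall y t, 0 <= quad k A y + 2 * t * L y + al * t * t).
  { intros y t. set (x := fun a => if Nat.ltb a k then y a else t).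
    assert (Hxk : x k = t) by (unfold x; rewrite Nat.ltb_irrefl; auto).
    assert (Hxy : forall a, (a < k)%nat -> x a = y a).
    { intros a Ha. unfold x. destruct (Nat.ltb_spec a k); [auto|lia]. }
    specialize (Hq x). change (0 <= quad (S k) A x) in Hq. rewrite quad_S, Hxk in Hq by auto.
    replace (quad k A x) with (quad k A y) in Hq
      by (apply rsum_ext; intros; apply rsum_ext; intros; rewrite !Hxy; auto).
    replace (rsum k (fun a => x a * A a k)) with (L y) in Hq
      by (apply rsum_ext; intros; rewrite Hxy; auto).
    exact Hq. }
  assert (Hquad0 : quad k A (fun _ => 0) = 0)
    by (apply rsum_eq0; intros; apply rsum_eq0; intros; ring).
  assert (HL0 : L (fun _ => 0) = 0) by (apply rsum_eq0; intros; ring).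
  assert (Hal : 0 <= al) by (pose proof (Hexp (fun _ => 0) 1); lra).
  destruct (Rle_lt_or_eq_dec 0 al Hal) as [Hpos|Hz].
  - pose proof (sqrt_lt_R0 al Hpos) as Hsq. pose proof (sqrt_sqrt al Hal) as Hss.
    set (v := fun a => A a k / sqrt al). exists v. split.
    + split; [intros a b Ha Hb; unfold v; rewrite (Hs a b) by lia; ring|]. intros y.
      change (0 <= quad k (fun a b => A a b - v a * v b) y).
      assert (Hv : rsum k (fun a => y a * v a) = L y / sqrt al).
      { unfold L, Rdiv. rewrite <- rsum_scal_r. apply rsum_ext. intros. unfold v, Rdiv. ring. }
      replace (quad k (fun a b => A a b - v a * v b) y)
        with (quad k A y - rsum k (fun a => y a * v a) * rsum k (fun b => y b * v b)).
      * rewrite Hv. pose proof (Hexp y (- L y / al)) as Hmin.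
        replace (quad k A y - L y / sqrt al * (L y / sqrt al)) with
          (quad k A y + 2 * (- L y / al) * L y + al * (- L y / al) * (- L y / al)); [auto|].
        field_simplify_eq; [|lra]. replace (sqrt al ^ 2) with al by (simpl; lra). ring.
      * unfold quad. rewrite <- rsum_mul, <- rsum_minus. apply rsum_ext. intros.
        rewrite <- rsum_minus. apply rsum_ext. intros. ring.
    + intros a Ha. unfold v. fold al. field_simplify_eq; [|lra].
      replace (sqrt al ^ 2) with al by (simpl; lra). ring.
  - assert (HL : forall y, L y = 0).
    { intros y. apply NNPP. intros Hn.
      pose proof (Hexp y (- (quad k A y + 1) / (2 * L y))) as Hy. rewrite <- Hz in Hy.
      replace (quad k A y + 2 * (- (quad k A y + 1) / (2 * L y)) * L y + 0 * _ * _)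
        with (-1) in Hy by (field; auto). lra. }
    exists (fun _ => 0). split.
    + split; [intros a b Ha Hb; rewrite (Hs a b) by lia; ring|]. intros y.
      pose proof (Hexp y 0). rewrite (rsum_ext k _ (fun a => rsum k (fun b => y a * A a b * y b)))
        by (intros; apply rsum_ext; intros; ring).
      change (0 <= quad k A y). lra.
    + intros a Ha. destruct (Nat.eq_dec a k) as [->|]; [fold al; lra|].
      pose proof (HL (kron a)) as Ha'. unfold L in Ha'. rewrite rsum_kron_l in Ha' by lia. lra.
Qed.

Lemma psd_gram k A : psd k A -> exists X : nat -> vec,
  forall a b, (a < k)%nat -> (b < k)%nat -> A a b = rsum k (fun r => X r a * X r b).
Proof.
  revert A. induction k as [|k IH]; intros A HA.
  - exists (fun _ _ => 0). lia.
  - destruct (psd_split k A HA) as [v [HA' Hcol]].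
    destruct (IH _ HA') as [X HX].
    exists (fun r a => if Nat.ltb r k then (if Nat.ltb a k then X r a else 0) else v a).
    intros a b Ha Hb. simpl. rewrite Nat.ltb_irrefl.
    destruct (Nat.ltb_spec b k); [destruct (Nat.ltb_spec a k)|].
    + rewrite (rsum_ext k _ (fun r => X r a * X r b))
        by (intros r Hr; destruct (Nat.ltb_spec r k); [auto|lia]).
      rewrite <- HX by auto. ring.
    + replace a with k by lia.
      rewrite rsum_eq0 by (intros r Hr; destruct (Nat.ltb_spec r k); [ring|lia]).
      rewrite (proj1 HA k b), Hcol by lia. ring.
    + replace b with k by lia.
      rewrite rsum_eq0 by (intros r Hr; destruct (Nat.ltb_spec r k); [ring|lia]).
      rewrite Hcol by auto. ring.
Qed.

Lemma psd_inner_ge0 k A B : psd k A -> psd k B -> 0 <= inner k A B.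
Proof.
  intros HA [HBs HBq]. destruct (psd_gram k A HA) as [X HX]. unfold inner.
  rewrite (rsum_ext k _ (fun a => rsum k (fun b => rsum k (fun r => X r a * B a b * X r b)))).
  - rewrite rsum_swap3. apply rsum_ge0. intros. apply HBq.
  - intros a Ha. apply rsum_ext. intros b Hb. rewrite HX, <- rsum_scal_r, (HBs b a) by auto.
    apply rsum_ext. intros. ring.
Qed.

Lemma quad_inner_outer k A x : quad k A x = inner k A (fun a b => x a * x b).
Proof. apply rsum_ext. intros. apply rsum_ext. intros. ring. Qed.

(** * Linear maps from S^k *)

Definition adj (d : nat) (C : nat -> mat) (v : vec) : mat :=
  fun a b => rsum d (fun l => v l * C l a b).

Lemma inner_adj k d C v X :
  inner k (adj d C v) X = rsum d (fun l => v l * apply_lin k C X l).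
Proof. apply inner_comb_l. Qed.

Lemma adj_sym k d C v : (forall l, (l < d)%nat -> sym k (C l)) -> sym k (adj d C v).
Proof.
  intros HC a b Ha Hb. apply rsum_ext. intros l Hl. rewrite (HC l Hl a b); auto.
Qed.

Lemma dLin_nrm k d C C' :
  dLin k d C C' = rsum d (fun l => nrm k (fun a b => C l a b - C' l a b)).
Proof. reflexivity. Qed.

Lemma dLin_ge0 k d C C' : 0 <= dLin k d C C'.
Proof. apply rsum_ge0. intros. apply nrm_ge0. Qed.

Lemma apply_lin_dist k d C C' Y :
  rsum d (fun l => Rabs (apply_lin k C Y l - apply_lin k C' Y l)) <= dLin k d C C' * nrm k Y.
Proof.
  unfold dLin. rewrite <- rsum_scal_r. apply rsum_le. intros l Hl.
  unfold apply_lin. rewrite <- inner_minus_l. apply inner_bound.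
Qed.

Lemma nrm_le_dLin k d C C' l :
  (l < d)%nat -> nrm k (fun a b => C l a b - C' l a b) <= dLin k d C C'.
Proof.
  intros Hl. apply (rsum_term_le d (fun l => nrm k (fun a b => C l a b - C' l a b))); auto.
  intros. apply nrm_ge0.
Qed.

Lemma adj_dist k d C C' v :
  nrm k (fun a b => adj d C v a b - adj d C' v a b) <=
  rsum d (fun l => Rabs (v l)) * dLin k d C C'.
Proof.
  rewrite (nrm_ext k _ (fun a b => rsum d (fun l => v l * (C l a b - C' l a b)))).
  - eapply Rle_trans; [apply nrm_comb|]. rewrite <- rsum_scal_r. apply rsum_le. intros l Hl.
    apply Rmult_le_compat_l; [apply Rabs_pos | apply nrm_le_dLin; auto].
  - intros. unfold adj. rewrite <- rsum_minus. f_equal. apply rsum_ext. intros. ring.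
Qed.

Section InjectiveLin.

Variables (k : nat) (C : nat -> mat).
Hypothesis Hinj : forall Y, sym k Y -> (forall l, (l < tri k)%nat -> apply_lin k C Y l = 0) ->
  forall a b, (a < k)%nat -> (b < k)%nat -> Y a b = 0.

(* Injectivity makes the images of the basis [sym_basis] free, so they span R^(tri k). *)
Lemma injective_lin_onto (x : vec) : exists D : mat, sym k D /\
  forall l, (l < tri k)%nat -> apply_lin k C D l = x l.
Proof.
  set (comb := fun beta : nat -> R => fun a b => rsum (tri k) (fun s => beta s * sym_basis s a b)).
  assert (Hcomb_apply : forall beta l, apply_lin k C (comb beta) l =
            rsum (tri k) (fun s => beta s * apply_lin k C (sym_basis s) l)).
  { intros. apply inner_comb_r. }
  assert (Hcomb_sym : forall beta, sym k (comb beta)).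
  { intros beta a b Ha Hb. apply rsum_ext. intros. rewrite (sym_basis_sym k i a b); auto. }
  destruct (free_vectors_span (tri k) (fun s l => apply_lin k C (sym_basis s) l) x)
    as [beta Hbeta].
  - intros beta Hb. apply (sym_basis_free k beta). intros [a b] [Ha Hb']. unfold entries. simpl.
    apply (Hinj (comb beta)); auto. intros l Hl. rewrite Hcomb_apply. apply Hb. auto.
  - exists (comb beta). split; auto. intros l Hl. rewrite Hcomb_apply, Hbeta; auto.
Qed.

Lemma injective_lin_bound : exists kap, 0 < kap /\ forall Y, sym k Y ->
  nrm k Y <= kap * rsum (tri k) (fun l => Rabs (apply_lin k C Y l)).
Proof.
  set (d := tri k).
  assert (Hpre : forall m, exists D, sym k D /\
                   forall l, (l < d)%nat -> apply_lin k C D l = kron l m)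
    by (intros m; apply injective_lin_onto).
  destruct (choice _ Hpre) as [D HD].
  set (kap := 1 + rsum d (fun m => nrm k (D m))).
  assert (HD0 : 0 <= rsum d (fun m => nrm k (D m))) by (apply rsum_ge0; intros; apply nrm_ge0).
  exists kap. split; [unfold kap; lra|]. intros Y HY.
  set (Y' := fun a b => rsum d (fun m => apply_lin k C Y m * D m a b)).
  assert (HYY' : forall a b, (a < k)%nat -> (b < k)%nat -> Y a b - Y' a b = 0).
  { apply (Hinj (fun a b => Y a b - Y' a b)).
    - intros a b Ha Hb. unfold Y'. rewrite (HY a b) by auto. f_equal. apply rsum_ext. intros.
      rewrite (proj1 (HD i) a b); auto.
    - intros l Hl. unfold apply_lin at 1. rewrite inner_minus_r. unfold Y'. rewrite inner_comb_r.
      rewrite (rsum_ext _ _ (fun m => apply_lin k C Y m * kron m l)).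
      + rewrite rsum_kron_r by auto. unfold apply_lin. ring.
      + intros m Hm. change (inner k (C l) (D m)) with (apply_lin k C (D m) l).
        rewrite (proj2 (HD m)), kron_sym; auto. }
  rewrite (nrm_ext k Y Y') by (intros a b Ha Hb; specialize (HYY' a b Ha Hb);
                               f_equal; lra).
  eapply Rle_trans; [apply nrm_comb|]. rewrite <- rsum_scal_l. apply rsum_le. intros m Hm.
  assert (nrm k (D m) <= kap).
  { pose proof (rsum_term_le d (fun m => nrm k (D m)) m ltac:(intros; apply nrm_ge0) Hm).
    unfold kap. lra. }
  pose proof (Rabs_pos (apply_lin k C Y m)). nra.
Qed.

End InjectiveLin.

(* [X' - X] is mapped by [C] to [(C - C') X'], so the inverse bound for [C] controls it once
   [kap * dLin C C'] is small enough to absorb the [X' - X] part of [X']. *)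
Lemma preimage_stable k d C C' kap X X' :
  (forall Y, sym k Y -> nrm k Y <= kap * rsum d (fun l => Rabs (apply_lin k C Y l))) ->
  0 <= kap -> sym k X -> sym k X' ->
  (forall l, (l < d)%nat -> apply_lin k C X l = apply_lin k C' X' l) ->
  kap * dLin k d C C' <= / 2 ->
  nrm k (fun a b => X' a b - X a b) <= 2 * kap * dLin k d C C' * nrm k X.
Proof.
  intros Hbound Hkap HX HX' Himg Hsmall.
  set (E := fun a b => X' a b - X a b). set (dl := dLin k d C C') in *.
  assert (Hdl : 0 <= dl) by apply dLin_ge0.
  assert (HE : nrm k E <= kap * (dl * nrm k X')).
  { eapply Rle_trans.
    - apply Hbound. intros a b Ha Hb. unfold E. rewrite (HX a b), (HX' a b); auto.
    - apply Rmult_le_compat_l; auto. eapply Rle_trans; [|apply apply_lin_dist].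
      apply Req_le. apply rsum_ext. intros l Hl. unfold E, apply_lin at 1.
      rewrite inner_minus_r. fold (apply_lin k C X' l) (apply_lin k C X l).
      rewrite Himg; auto. }
  assert (HX'E : nrm k X' <= nrm k X + nrm k E).
  { rewrite (nrm_ext k X' (fun a b => X a b + E a b)); [apply nrm_add|].
    intros. unfold E. f_equal. ring. }
  pose proof (nrm_ge0 k E). pose proof (nrm_ge0 k X).
  assert (nrm k E <= kap * dl * (nrm k X + nrm k E)).
  { eapply Rle_trans; [apply HE|]. rewrite <- Rmult_assoc.
    apply Rmult_le_compat_l; auto. nra. }
  fold E. nra.
Qed.

Lemma cont_on_of_local_lipschitz {X Y : Type} (S : X -> Prop)
  (dX : X -> X -> R) (dY : Y -> Y -> R) (f : X -> Y) :
  (forall x x', 0 <= dX x x') ->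
  (forall x, S x -> exists r K, 0 < r /\ 0 <= K /\
     forall x', S x' -> dX x x' < r -> dY (f x) (f x') <= K * dX x x') ->
  cont_on S dX dY f.
Proof.
  intros Hpos Hlip x Hx eps Heps. destruct (Hlip x Hx) as [r [K [Hr [HK Hle]]]].
  exists (Rmin r (eps / (K + 1))). split.
  - apply Rmin_pos; auto. apply Rdiv_lt_0_compat; lra.
  - intros x' Hx' Hd. pose proof (Hpos x x').
    assert (Hd1 : dX x x' < r) by (eapply Rlt_le_trans; [apply Hd | apply Rmin_l]).
    assert (Hd2 : dX x x' < eps / (K + 1)) by (eapply Rlt_le_trans; [apply Hd | apply Rmin_r]).
    assert ((K + 1) * dX x x' < eps).
    { apply (Rmult_lt_compat_l (K + 1)) in Hd2; [|lra].
      replace ((K + 1) * (eps / (K + 1))) with eps in Hd2 by (field; lra). auto. }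
    specialize (Hle x' Hx' Hd1). nra.
Qed.

Definition psd_lift (k d : nat) (C : nat -> mat) (x : vec) : mat :=
  epsilon (inhabits (fun _ _ => 0))
    (fun X => psd k X /\ forall l, (l < d)%nat -> x l = apply_lin k C X l).

Lemma dSF_eq0 p q k (X Y : (nat -> mat) * (nat -> mat)) :
  (forall i a b, (i < p)%nat -> (a < k)%nat -> (b < k)%nat -> fst X i a b = fst Y i a b) ->
  (forall j a b, (j < q)%nat -> (a < k)%nat -> (b < k)%nat -> snd X j a b = snd Y j a b) ->
  dSF p q k X Y = 0.
Proof.
  intros HA HB. unfold dSF.
  rewrite !rsum_eq0; [ring| |]; intros; apply rsum_eq0; intros; apply rsum_eq0; intros;
    rewrite ?HA, ?HB, Rminus_diag by auto; apply Rabs_R0.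
Qed.

Lemma dSF_nrm p q k (X Y : (nat -> mat) * (nat -> mat)) :
  dSF p q k X Y = rsum p (fun i => nrm k (fun a b => fst X i a b - fst Y i a b)) +
                  rsum q (fun j => nrm k (fun a b => snd X j a b - snd Y j a b)).
Proof. reflexivity. Qed.

Lemma dSF_ge0 p q k X Y : 0 <= dSF p q k X Y.
Proof.
  apply Rplus_le_le_0_compat; apply rsum_ge0; intros; apply nrm_ge0.
Qed.

Lemma nrm_snd_le_dSF p q k (X Y : (nat -> mat) * (nat -> mat)) j : (j < q)%nat ->
  nrm k (fun a b => snd X j a b - snd Y j a b) <= dSF p q k X Y.
Proof.
  intros Hj. unfold dSF.
  pose proof (rsum_ge0 p (fun i => nrm k (fun a b => fst X i a b - fst Y i a b))
                ltac:(intros; apply nrm_ge0)).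
  pose proof (rsum_term_le q (fun j => nrm k (fun a b => snd X j a b - snd Y j a b)) j
                ltac:(intros; apply nrm_ge0) Hj).
  unfold nrm in *. lra.
Qed.

Section PsdFactorizations.

Variables (p q k : nat) (M U V : mat) (c : nat -> nat).
Local Notation d := (tri k).

Hypothesis Hc : forall l, (l < d)%nat -> (c l < q)%nat.
Hypothesis Hfree : lin_indep p d (fun l i => M i (c l)).
Hypothesis HUV : forall i j, (i < p)%nat -> (j < q)%nat ->
  M i j = rsum d (fun l => U i l * V l j).

Lemma V_cols_free : free_on (fun n => (n < d)%nat) d (fun m n => V n (c m)).
Proof.
  intros beta Hbeta. apply Hfree. intros i Hi.
  rewrite (rsum_ext d _ (fun m => rsum d (fun n => U i n * (beta m * V n (c m))))).
  - rewrite rsum_swap. apply rsum_eq0. intros n Hn. rewrite rsum_scal_l, Hbeta; auto. ring.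
  - intros m Hm. rewrite HUV, <- rsum_scal_l by auto. apply rsum_ext. intros. ring.
Qed.

Lemma V_cols_right_inverse : exists G : nat -> nat -> R,
  forall n l, (n < d)%nat -> rsum d (fun m => G m l * V n (c m)) = kron n l.
Proof.
  destruct (choice (fun l (gam : nat -> R) => forall n, (n < d)%nat ->
                      kron n l = rsum d (fun m => gam m * V n (c m)))) as [G HG].
  { intros l. apply (free_vectors_span d _ (fun n => kron n l) V_cols_free). }
  exists (fun m l => G l m). intros. rewrite HG; auto.
Qed.

Section Factorization.

Variables (A B : nat -> mat).
Hypothesis HBsym : forall j, (j < q)%nat -> sym k (B j).
Hypothesis HAB : forall i j, (i < p)%nat -> (j < q)%nat -> M i j = inner k (A i) (B j).

Lemma fact_cols_free : free_on (sq k) d (fun m => entries (B (c m))).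
Proof.
  intros beta Hbeta. apply Hfree. intros i Hi.
  rewrite (rsum_ext d _ (fun m => beta m * inner k (A i) (B (c m)))) by (intros; rewrite HAB; auto).
  rewrite <- inner_comb_r, (inner_ext_r k (A i) _ (fun _ _ => 0)).
  - apply rsum_eq0. intros. apply rsum_eq0. intros. ring.
  - intros a b Ha Hb. exact (Hbeta (a, b) (conj Ha Hb)).
Qed.

Lemma fact_cols_span Z : sym k Z -> exists beta, forall a b, (a < k)%nat -> (b < k)%nat ->
  Z a b = rsum d (fun m => beta m * B (c m) a b).
Proof.
  apply sym_free_spans; [apply fact_cols_free | intros; apply HBsym; auto].
Qed.

Lemma fact_A_separating Z : sym k Z -> (forall i, (i < p)%nat -> inner k (A i) Z = 0) ->
  forall a b, (a < k)%nat -> (b < k)%nat -> Z a b = 0.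
Proof.
  intros HZ HA. destruct (fact_cols_span Z HZ) as [beta Hbeta].
  assert (Hbeta0 : forall m, (m < d)%nat -> beta m = 0).
  { apply Hfree. intros i Hi. rewrite <- (HA i Hi), (inner_ext_r k (A i) Z _ Hbeta).
    rewrite inner_comb_r. apply rsum_ext. intros. rewrite HAB; auto. }
  intros a b Ha Hb. rewrite Hbeta by auto. apply rsum_eq0. intros. rewrite Hbeta0; auto. ring.
Qed.

Lemma fact_B_separating Y : sym k Y -> (forall j, (j < q)%nat -> inner k Y (B j) = 0) ->
  forall a b, (a < k)%nat -> (b < k)%nat -> Y a b = 0.
Proof.
  intros HY HB. destruct (fact_cols_span Y HY) as [beta Hbeta].
  apply inner_self_eq0; auto.
  rewrite (inner_ext_r k Y Y _ Hbeta), inner_comb_r. apply rsum_eq0. intros.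
  rewrite HB; auto. ring.
Qed.

Lemma lin_injective_of_fact C :
  (forall j, (j < q)%nat -> forall a b, (a < k)%nat -> (b < k)%nat ->
     B j a b = adj d C (fun l => V l j) a b) ->
  forall Y, sym k Y -> (forall l, (l < d)%nat -> apply_lin k C Y l = 0) ->
  forall a b, (a < k)%nat -> (b < k)%nat -> Y a b = 0.
Proof.
  intros HBC Y HY H0. apply fact_B_separating; auto. intros j Hj.
  rewrite inner_comm, (inner_ext_l k _ _ Y (HBC j Hj)), inner_adj.
  apply rsum_eq0. intros. rewrite H0; auto. ring.
Qed.

End Factorization.

Definition fact_to_lin (G : nat -> nat -> R) (AB : (nat -> mat) * (nat -> mat)) : nat -> mat :=
  fun l a b => rsum d (fun m => G m l * snd AB (c m) a b).

Definition lin_to_fact (C : nat -> mat) : (nat -> mat) * (nat -> mat) :=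
  (fun i => psd_lift k d C (U i), fun j => adj d C (fun l => V l j)).

Lemma psd_lift_spec C : DeltaPQ p q k d U V C -> forall i, (i < p)%nat ->
  psd k (psd_lift k d C (U i)) /\
  forall l, (l < d)%nat -> U i l = apply_lin k C (psd_lift k d C (U i)) l.
Proof.
  intros [_ [HP _]] i Hi.
  apply (epsilon_spec _ (fun X => psd k X /\ forall l, (l < d)%nat -> U i l = apply_lin k C X l)).
  apply HP.
  exists (kron i). split; [intros; unfold kron; destruct (Nat.eqb i i0); lra|].
  intros l Hl. rewrite rsum_kron_l; auto.
Qed.

Lemma lin_to_fact_SF C : DeltaPQ p q k d U V C -> SF p q k M (lin_to_fact C).
Proof.
  intros HD. pose proof (psd_lift_spec C HD) as Hlift. destruct HD as [Hlin [_ HQ]].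
  split; [|split]; simpl.
  - intros i Hi. apply Hlift; auto.
  - intros j Hj. split; [apply adj_sym; auto|]. intros x.
    change (0 <= quad k (adj d C (fun l => V l j)) x).
    rewrite quad_inner_outer, inner_adj. apply HQ; auto. apply psd_outer.
  - intros i j Hi Hj. rewrite HUV, inner_comm, inner_adj by auto.
    apply rsum_ext. intros l Hl. rewrite <- (proj2 (Hlift i Hi)); auto. ring.
Qed.

Lemma Delta_lin_injective C : DeltaPQ p q k d U V C ->
  forall Y, sym k Y -> (forall l, (l < d)%nat -> apply_lin k C Y l = 0) ->
  forall a b, (a < k)%nat -> (b < k)%nat -> Y a b = 0.
Proof.
  intros HD. destruct (lin_to_fact_SF C HD) as [_ [HB HM]].
  apply (lin_injective_of_fact (fst (lin_to_fact C)) (snd (lin_to_fact C)));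
    auto; intros; apply HB; auto.
Qed.

Lemma lin_to_fact_cont : cont_on (DeltaPQ p q k d U V) (dLin k d) (dSF p q k) lin_to_fact.
Proof.
  apply cont_on_of_local_lipschitz; [apply dLin_ge0|]. intros C HC.
  destruct (injective_lin_bound k C (Delta_lin_injective C HC)) as [kap [Hkap Hbound]].
  set (KA := rsum p (fun i => nrm k (psd_lift k d C (U i)))).
  set (KB := rsum q (fun j => rsum d (fun l => Rabs (V l j)))).
  assert (HKA : 0 <= KA) by (apply rsum_ge0; intros; apply nrm_ge0).
  assert (HKB : 0 <= KB) by (apply rsum_ge0; intros; apply rsum_ge0; intros; apply Rabs_pos).
  exists (/ (2 * kap)), (2 * kap * KA + KB). split; [|split]; [apply Rinv_0_lt_compat; lra|nra|].
  intros C' HC' Hd. pose proof (dLin_ge0 k d C C').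
  assert (Hsmall : kap * dLin k d C C' <= / 2).
  { apply (Rmult_lt_compat_l kap) in Hd; auto.
    replace (kap * / (2 * kap)) with (/ 2) in Hd by (field; lra). lra. }
  rewrite dSF_nrm. cbn [fst snd lin_to_fact]. rewrite Rmult_plus_distr_r. apply Rplus_le_compat.
  - unfold KA. rewrite Rmult_assoc, <- rsum_scal_r, <- rsum_scal_l. apply rsum_le. intros i Hi.
    destruct (psd_lift_spec C HC i Hi) as [[HXs _] HX].
    destruct (psd_lift_spec C' HC' i Hi) as [[HX's _] HX'].
    rewrite (nrm_ext k _ (fun a b => psd_lift k d C' (U i) a b - psd_lift k d C (U i) a b))
      by (intros; apply Rabs_minus_sym).
    replace (2 * kap * (nrm k (psd_lift k d C (U i)) * dLin k d C C'))
      with (2 * kap * dLin k d C C' * nrm k (psd_lift k d C (U i))) by ring.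
    apply (preimage_stable k d C C'); auto; [lra|]. intros. rewrite <- HX, <- HX'; auto.
  - unfold KB. rewrite <- rsum_scal_r. apply rsum_le. intros j Hj. apply adj_dist.
Qed.

Variable G : nat -> nat -> R.
Hypothesis HG : forall n l, (n < d)%nat -> rsum d (fun m => G m l * V n (c m)) = kron n l.

Lemma lin_to_fact_to_lin C : dLin k d (fact_to_lin G (lin_to_fact C)) C = 0.
Proof.
  apply rsum_eq0. intros l Hl. apply rsum_eq0. intros a Ha. apply rsum_eq0. intros b Hb.
  unfold fact_to_lin, lin_to_fact, adj. simpl.
  rewrite (rsum_ext _ _ (fun m => rsum d (fun n => C n a b * (G m l * V n (c m)))))
    by (intros; rewrite <- rsum_scal_l; apply rsum_ext; intros; ring).
  rewrite rsum_swap, (rsum_ext _ _ (fun n => C n a b * kron n l))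
    by (intros; rewrite rsum_scal_l, HG; auto).
  rewrite rsum_kron_r, Rminus_diag by auto. apply Rabs_R0.
Qed.

Lemma fact_to_lin_cont : cont_on (SF p q k M) (dSF p q k) (dLin k d) (fact_to_lin G).
Proof.
  apply cont_on_of_local_lipschitz; [apply dSF_ge0|]. intros x _.
  set (K := rsum d (fun l => rsum d (fun m => Rabs (G m l)))).
  exists 1, K. split; [lra|split; [apply rsum_ge0; intros; apply rsum_ge0; intros; apply Rabs_pos|]].
  intros x' _ _. unfold K. rewrite dLin_nrm, <- rsum_scal_r. apply rsum_le. intros l Hl.
  rewrite (nrm_ext k _ (fun a b => rsum d (fun m => G m l * (snd x (c m) a b - snd x' (c m) a b))))
    by (intros; unfold fact_to_lin; rewrite <- rsum_minus; f_equal; apply rsum_ext; intros; ring).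
  eapply Rle_trans; [apply nrm_comb|]. rewrite <- rsum_scal_r. apply rsum_le. intros m Hm.
  apply Rmult_le_compat_l; [apply Rabs_pos | apply nrm_snd_le_dSF; auto].
Qed.

Section OnSF.

Variable AB : (nat -> mat) * (nat -> mat).
Hypothesis HAB : SF p q k M AB.

Lemma fact_to_lin_sym : forall l, sym k (fact_to_lin G AB l).
Proof.
  destruct HAB as [_ [HB _]]. intros l a b Ha Hb. apply rsum_ext. intros m Hm.
  rewrite (proj1 (HB (c m) (Hc m Hm)) a b); auto.
Qed.

Lemma fact_to_lin_A : forall i l, (i < p)%nat -> (l < d)%nat ->
  apply_lin k (fact_to_lin G AB) (fst AB i) l = U i l.
Proof.
  destruct HAB as [_ [_ HM]]. intros i l Hi Hl. unfold apply_lin, fact_to_lin.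
  rewrite inner_comb_l.
  rewrite (rsum_ext _ _ (fun m => rsum d (fun n => U i n * (G m l * V n (c m))))).
  - rewrite rsum_swap, (rsum_ext _ _ (fun n => U i n * kron n l))
      by (intros; rewrite rsum_scal_l, HG; auto).
    apply rsum_kron_r; auto.
  - intros m Hm. rewrite inner_comm, <- HM, HUV, <- rsum_scal_l by auto.
    apply rsum_ext. intros. ring.
Qed.

Lemma fact_to_lin_adj : forall j, (j < q)%nat -> forall a b, (a < k)%nat -> (b < k)%nat ->
  snd AB j a b = adj d (fact_to_lin G AB) (fun l => V l j) a b.
Proof.
  destruct HAB as [HA [HB HM]]. intros j Hj a b Ha Hb.
  set (Z := fun a b => adj d (fact_to_lin G AB) (fun l => V l j) a b - snd AB j a b).
  enough (Z a b = 0) by (unfold Z in *; lra).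
  apply (fact_A_separating (fst AB) (snd AB)); auto.
  - intros; apply HB; auto.
  - intros a' b' Ha' Hb'. unfold Z. rewrite (proj1 (HB j Hj) a' b') by auto. f_equal.
    apply (adj_sym k); auto. intros. apply fact_to_lin_sym.
  - intros i Hi. unfold Z. rewrite inner_minus_r, <- HM, HUV, inner_comm, inner_adj by auto.
    rewrite <- rsum_minus. apply rsum_eq0. intros. rewrite fact_to_lin_A; auto. ring.
Qed.

Lemma fact_to_lin_Delta : DeltaPQ p q k d U V (fact_to_lin G AB).
Proof.
  pose proof HAB as [HA [HB HM]]. split; [|split].
  - intros l _. apply fact_to_lin_sym.
  - intros x [lam [Hlam Hx]]. exists (fun a b => rsum p (fun i => lam i * fst AB i a b)).
    split; [apply psd_comb; auto|]. intros l Hl.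
    rewrite Hx by auto. unfold apply_lin. rewrite inner_comb_r. apply rsum_ext.
    intros i Hi. rewrite <- (fact_to_lin_A i l Hi Hl). auto.
  - intros X HX j Hj. unfold in_Q. rewrite <- inner_adj.
    rewrite <- (inner_ext_l k _ _ X (fact_to_lin_adj j Hj)). apply psd_inner_ge0; auto.
Qed.

Lemma fact_to_lin_to_fact : dSF p q k (lin_to_fact (fact_to_lin G AB)) AB = 0.
Proof.
  pose proof HAB as [HA [HB HM]].
  pose proof (psd_lift_spec _ fact_to_lin_Delta) as Hlift.
  apply dSF_eq0; cbn [fst snd lin_to_fact].
  - intros i a b Hi Ha Hb.
    enough (psd_lift k d (fact_to_lin G AB) (U i) a b - fst AB i a b = 0) by lra.
    apply (lin_injective_of_fact (fst AB) (snd AB) ltac:(intros; apply HB; auto) HM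
             (fact_to_lin G AB) fact_to_lin_adj
             (fun a b => psd_lift k d (fact_to_lin G AB) (U i) a b - fst AB i a b)); auto.
    + intros a' b' Ha' Hb'. rewrite (proj1 (proj1 (Hlift i Hi)) a' b'), (proj1 (HA i Hi) a' b'); auto.
    + intros l Hl. unfold apply_lin. rewrite inner_minus_r.
      fold (apply_lin k (fact_to_lin G AB) (fst AB i) l)
           (apply_lin k (fact_to_lin G AB) (psd_lift k d (fact_to_lin G AB) (U i)) l).
      rewrite fact_to_lin_A, <- (proj2 (Hlift i Hi)) by auto. ring.
  - intros j a b Hj Ha Hb. symmetry. apply fact_to_lin_adj; auto.
Qed.

End OnSF.

End PsdFactorizations.

Theorem proposition7p3 (p q k : nat) (M : mat)
  (Hnonneg : forall i j, (i < p)%nat -> (j < q)%nat -> 0 <= M i j)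
  (Hrank : mat_rank_eq p q M (tri k))
  (Hpsd : psd_rank_eq p q M k)
  (U V : mat)
  (HUV : forall i j, (i < p)%nat -> (j < q)%nat ->
           M i j = rsum (tri k) (fun l => U i l * V l j)) :
  homeomorphic (SF p q k M) (dSF p q k) (DeltaPQ p q k (tri k) U V) (dLin k (tri k)).
Proof.
  destruct Hrank as [[c [Hc Hfree]] _].
  destruct (V_cols_right_inverse p q k M U V c Hc Hfree HUV) as [G HG].
  exists (fact_to_lin k c G), (lin_to_fact k U V).
  split; [|split; [|split; [|split; [|split]]]].
  - apply (fact_to_lin_Delta p q k M U V c Hc Hfree HUV G HG).
  - apply (lin_to_fact_SF p q k M U V HUV).
  - apply (fact_to_lin_to_fact p q k M U V c Hc Hfree HUV G HG).
  - intros C _. apply (lin_to_fact_to_lin k U V c G HG).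
  - apply (fact_to_lin_cont p q k M c Hc G).
  - apply (lin_to_fact_cont p q k M U V c Hc Hfree HUV).
Qed.
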